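(* Let $m\ge 2$, $n\ge 1$, and let $\overrightarrow{K_{1,n}}$ be any orientation of the star $K_{1,n}$. Then the oriented star forest $m\overrightarrow{K_{1,n}}$, the disjoint union of $m$ copies of $\overrightarrow{K_{1,n}}$, is both $\{0\}$-antimagic and $\{0,1\}$-antimagic.
   Context: In an oriented graph $\overrightarrow{G}$, $d(u,v)$ is the length of a shortest directed path from $u$ to $v$ ($d(u,u)=0$, $d(u,v)=\infty$ if there is none). Let $\partial=\max\{d(u,v)<\infty : u,v\in V(\overrightarrow{G})\}$. A distance set is a nonempty $D\subseteq\{0,1,\dots,\partial\}$. The $D$-neighborhood of $u$ is $N_D(u)=\{v : d(u,v)\in D\}$. For a bijection $f:V(\overrightarrow{G})\to\{1,\dots,|V(\overrightarrow{G})|\}$, the $D$-weight of $u$ is $\omega_D(u)=\sum_{v\in N_D(u)} f(v)$. $\overrightarrow{G}$ is $D$-antimagic if $D\subseteq\{0,\dots,\partial\}$ and there is such a bijection $f$ with all $D$-weights pairwise distinct. *)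

From mathcomp Require Import all_boot.
Set Implicit Arguments. Unset Strict Implicit. Unset Printing Implicit Defensive.

Section OrientedGraph.
Variables (V : finType) (arc : rel V).

Definition step (A : {set V}) : {set V} := [set y | [exists x in A, arc x y]].

Fixpoint walkset (k : nat) (u : V) : {set V} :=
  if k is k'.+1 then step (walkset k' u) else [set u].

(* d(u,v) = k : a directed walk of length k exists and none shorter
   (the shortest walk length is the shortest path length) *)
Definition is_dist (u v : V) (k : nat) : bool :=
  (v \in walkset k u) && [forall j : 'I_k, v \notin walkset j u].

(* the directed diameter: max of finite distances (finite distances are < #|V|) *)
Definition ddiam : nat :=
  \max_(u : V) \max_(v : V) \max_(k < #|V|) (if is_dist u v k then nat_of_ord k else 0).

Definition NbD (D : seq nat) (u : V) : {set V} :=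
  [set v | has (is_dist u v) D].

Definition weightD (f : V -> nat) (D : seq nat) (u : V) : nat :=
  \sum_(v in NbD D u) f v.

Definition labeling (f : V -> nat) : Prop :=
  (forall v, 1 <= f v <= #|V|) /\ injective f /\
  (forall i, 1 <= i <= #|V| -> exists v, f v = i).

Definition D_antimagic (D : seq nat) : Prop :=
  D != [::] /\ all (fun k => k <= ddiam) D /\
  exists f, labeling f /\ injective (weightD f D).

End OrientedGraph.

(* Oriented star forest m K_{1,n}: copy c, vertex None = center, Some j = leaf j.
   Orientation o : o j = true means arc center -> leaf j, false means leaf j -> center. *)
Definition star_forest_arc (m n : nat) (o : 'I_n -> bool) : rel ('I_m * option 'I_n) :=
  fun x y => (x.1 == y.1) &&
    match x.2, y.2 with
    | None, Some j => o j
    | Some j, None => ~~ o j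
    | _, _ => false
    end.
Arguments star_forest_arc m n o : clear implicits.

From mathcomp Require Import all_boot zify.

(* For D = {0} the weight of a vertex is its own label, so any bijection
   works.  For D = {0, 1} it is the label of the vertex plus the labels of its
   out-neighbours: an out-leaf (arc center -> leaf) weighs its own label, an
   in-leaf its label plus that of its center, and a center its label plus the
   labels of the out-leaves of its star.  Give each of these three classes of
   vertices a block of consecutive labels, listed copy by copy; inside a class
   the weights are then distinct by uniqueness of base-d expansions.  The
   blocks are ordered so that the weight ranges of the classes are disjoint:
   out-leaves, centers, in-leaves when a star has at most one out-leaf, and
   in-leaves, out-leaves, centers otherwise, because a center then collects at
   least two labels exceeding every in-leaf label. *)

Set Implicit Arguments.
Unset Strict Implicit.
Unset Printing Implicit Defensive.

Section Graph.
Variables (V : finType) (arc : rel V).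

Lemma injective_labeling (f : V -> nat) :
  (forall v, 0 < f v <= #|V|) -> injective f -> labeling f.
Proof.
move=> f_range f_inj; do 2!split=> //.
have [_ img_f] : (size (map f (enum V)) = size (iota 1 #|V|)) *
                 (map f (enum V) =i iota 1 #|V|).
  apply: uniq_min_size; first by rewrite map_inj_uniq ?enum_uniq.
    by move=> _ /mapP[v _ ->]; rewrite mem_iota; have := f_range v; lia.
  by rewrite size_iota size_map -cardE.
move=> k k_range; have : k \in map f (enum V) by rewrite img_f mem_iota; lia.
by case/mapP=> v _ ->; exists v.
Qed.

Lemma is_dist0 u v : is_dist arc u v 0 = (v == u).
Proof. by rewrite /is_dist /= inE; case: eqVneq => //= _; apply/forallP=> -[]. Qed.

Lemma weightD0 f u : weightD arc f [:: 0] u = f u.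
Proof. by rewrite /weightD (big_pred1 u) // => v; rewrite inE /= is_dist0 orbF. Qed.

Lemma D_antimagic0 : D_antimagic arc [:: 0].
Proof.
do 2!split=> //; exists (fun v => (enum_rank v).+1); split.
  apply: injective_labeling => [v|u v [/ord_inj/enum_rank_inj]] //.
  by rewrite ltn_ord.
by move=> u v; rewrite !weightD0 => -[/ord_inj/enum_rank_inj].
Qed.

Hypothesis arc_irr : irreflexive arc.

Lemma is_dist1 u v : is_dist arc u v 1 = arc u v.
Proof.
rewrite /is_dist /= /step inE.
have -> : [exists x in [set u], arc x v] = arc u v.
  by apply/existsP/idP => [[x /andP[/set1P -> //]]|uv]; exists u; rewrite set11.
case: (boolP (arc u v)) => //= uv; apply/forallP=> -[[|//] ?] /=.
by rewrite inE; apply: contraTneq uv => ->; rewrite arc_irr.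
Qed.

Lemma weightD01 f u :
  weightD arc f [:: 0; 1] u = f u + \sum_(v | arc u v) f v.
Proof.
rewrite /weightD (bigD1 u) /=; last by rewrite inE /= is_dist0 eqxx.
congr (_ + _); apply: eq_bigl => v; rewrite inE /= is_dist0 is_dist1 orbF.
by case: eqVneq => [->|] /=; rewrite ?arc_irr ?andbF ?andbT.
Qed.

Lemma ddiam_gt0 u v : arc u v -> 0 < ddiam arc.
Proof.
move=> uv; have card_gt1 : 1 < #|V|.
  apply/card_gt1P; exists u, v; split=> //.
  by apply: contraTneq uv => ->; rewrite arc_irr.
apply: leq_trans (leq_bigmax u); apply: leq_trans (leq_bigmax v).
by apply: leq_trans (leq_bigmax (Ordinal card_gt1)); rewrite /= is_dist1 uv.
Qed.

Lemma D_antimagic01 u v (f : V -> nat) : arc u v -> labeling f ->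
  injective (fun x => f x + \sum_(y | arc x y) f y) -> D_antimagic arc [:: 0; 1].
Proof.
move=> uv f_lab f_inj; split=> //; split; first by rewrite /= (ddiam_gt0 uv).
by exists f; split=> // x y; rewrite !weightD01 => /f_inj.
Qed.

End Graph.

Lemma injective_by_blocks (T K : Type) (kind : T -> K) (pos : K -> nat)
    (g : T -> nat) :
  injective pos ->
  (forall x y, pos (kind x) < pos (kind y) -> g x < g y) ->
  (forall x y, kind x = kind y -> g x = g y -> x = y) ->
  injective g.
Proof.
move=> pos_inj g_lt g_inj x y gxy.
case: (ltngtP (pos (kind x)) (pos (kind y))) => [/g_lt|/g_lt|/pos_inj/g_inj-> //];
  by rewrite gxy ltnn.
Qed.

Lemma mulnD_inj d i i' r r' :
  r < d -> r' < d -> i * d + r = i' * d + r' -> i = i' /\ r = r'.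
Proof.
move=> rd r'd e; have d_gt0 : 0 < d by lia.
have : (i * d + r) %/ d = (i' * d + r') %/ d by rewrite e.
by rewrite !divnMDl // !divn_small // !addn0 => ii'; split; lia.
Qed.

Lemma mulnD_lt m d i r : i < m -> r < d -> i * d + r < m * d.
Proof. by move=> im rd; nia. Qed.

Section StarForest.
Variables (m n : nat) (o : 'I_n -> bool).

Local Notation V := ('I_m * option 'I_n)%type.
Local Notation arc := (star_forest_arc m n o).

Lemma star_forest_irr : irreflexive arc.
Proof. by case=> i [j|]; rewrite /star_forest_arc /= eqxx. Qed.

Lemma star_forest_has_arc : 0 < m -> 0 < n -> exists u v, arc u v.
Proof.
move=> m_gt0 n_gt0; pose i : 'I_m := Ordinal m_gt0; pose j : 'I_n := Ordinal n_gt0.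
case oj: (o j); [exists (i, None), (i, Some j) | exists (i, Some j), (i, None)];
  by rewrite /star_forest_arc /= ?eqxx oj.
Qed.

Definition leaves (s : bool) : {set 'I_n} := [set j | o j == s].

Lemma out_sum_leaf f i j :
  \sum_(v | arc (i, Some j) v) f v = if o j then 0 else f (i, None).
Proof.
case oj: (o j).
  by rewrite big_pred0 // => -[i' [k|]]; rewrite /star_forest_arc /= ?oj ?andbF.
rewrite (big_pred1 (i, None)) // => -[i' [k|]];
  by rewrite /star_forest_arc /= ?oj xpair_eqE ?andbT ?andbF // eq_sym.
Qed.

Lemma out_sum_center f i :
  \sum_(v | arc (i, None) v) f v = \sum_(j in leaves true) f (i, Some j).
Proof.
pose leaf_of (v : V) := if v.1 == i then v.2 else None.
rewrite (reindex_omap (fun j => (i, Some j)) leaf_of).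
  by apply: eq_bigl => j; rewrite /star_forest_arc /leaf_of /= ?eqxx inE eqb_id ?andbT.
case=> i' [k|]; rewrite /star_forest_arc /= ?andbF // => /andP[/eqP <- _].
by rewrite /leaf_of eqxx.
Qed.

Definition rank (j : 'I_n) : nat := #|[set k in leaves (o j) | k < j]|.

Definition nleaves (s : bool) : nat := #|leaves s|.

Local Notation nout := (nleaves true).
Local Notation nin := (nleaves false).

Lemma card_leaves : nout + nin = n.
Proof.
rewrite -[RHS]card_ord -(cardsC (leaves true)); congr (_ + _).
by apply: eq_card => j; rewrite !inE eqbF_neg eqb_id.
Qed.

Lemma mul_card_leaves : m * nout + m * nin = m * n.
Proof. by rewrite -mulnDr card_leaves. Qed.

Lemma rank_lt j : rank j < nleaves (o j).
Proof.
apply/proper_card/properP; split; first by apply/subsetP=> k /setIdP[].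
by exists j; rewrite !inE ?eqxx ?ltnn.
Qed.

Lemma ltn_rank j j' : o j = o j' -> j < j' -> rank j < rank j'.
Proof.
move=> ojj' jj'; apply/proper_card/properP; split.
  by apply/subsetP=> k /setIdP[]; rewrite !inE ojj' => -> /= /ltn_trans->.
by exists j; rewrite !inE ?ojj' ?eqxx ?ltnn.
Qed.

Lemma rank_inj j j' : o j = o j' -> rank j = rank j' -> j = j'.
Proof.
move=> ojj' rjj'.
case: (ltngtP j j') => [/(ltn_rank ojj')|/(ltn_rank (esym ojj'))|/val_inj //];
  by rewrite rjj' ltnn.
Qed.

Lemma sum_rank_le : \sum_(j in leaves true) rank j <= nout * nout.
Proof.
rewrite -sum_nat_const; apply: leq_sum => j; rewrite inE => /eqP oj.
by apply: ltnW; rewrite -oj rank_lt.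
Qed.

Lemma leaf_index_inj d (i i' : 'I_m) j j' :
  o j = o j' -> nleaves (o j) <= d ->
  i * d + rank j = i' * d + rank j' -> (i, Some j) = (i', Some j') :> V.
Proof.
move=> ojj' cd /mulnD_inj[]; rewrite ?(leq_trans (rank_lt _)) -?ojj' //.
by move=> /val_inj-> /(rank_inj ojj')->.
Qed.

Definition kind (v : V) : option bool := omap o v.2.

Definition of_kind (x_out x_in x_center : nat) (k : option bool) : nat :=
  if k is Some s then (if s then x_out else x_in) else x_center.

Definition block_index (v : V) : nat :=
  if v.2 is Some j then v.1 * nleaves (o j) + rank j else v.1.

Definition block_size (k : option bool) : nat :=
  if k is Some s then m * nleaves s else m.

Lemma leaf_index_lt (i : 'I_m) j : i * nleaves (o j) + rank j < m * nleaves (o j).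
Proof. exact: mulnD_lt (rank_lt j). Qed.

Lemma block_index_lt v : block_index v < block_size (kind v).
Proof. by case: v => i [j|]; rewrite /block_index //= leaf_index_lt. Qed.

Lemma block_index_inj u v :
  kind u = kind v -> block_index u = block_index v -> u = v.
Proof.
case: u v => [i [j|]] [i' [j'|]] //=; rewrite /block_index /=; last first.
  by move=> _ /val_inj->.
by move=> [ojj']; rewrite -ojj'; apply: leaf_index_inj.
Qed.

Section Labeling.
Variables (bout bin bc : nat).

Local Notation base := (of_kind bout bin bc).

Definition label (v : V) : nat := base (kind v) + block_index v.

Lemma labeling_label (pos : option bool -> nat) :
  injective pos ->
  (forall k, 0 < base k /\ base k + block_size k <= (m * n.+1).+1) ->
  (forall k k', pos k < pos k' -> base k + block_size k <= base k') ->
  labeling label.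
Proof.
move=> pos_inj base_range base_lt; apply: injective_labeling.
  move=> v; rewrite card_prod card_option !card_ord.
  by have := base_range (kind v); have := block_index_lt v; rewrite /label; lia.
apply: (injective_by_blocks (kind := kind) pos_inj) => [u v /base_lt|u v kuv].
  by have := block_index_lt u; rewrite /label; lia.
by rewrite /label kuv => /addnI; apply: block_index_inj.
Qed.

Definition weight (v : V) : nat := label v + \sum_(u | arc v u) label u.

Lemma weight_out_leaf i j :
  o j -> weight (i, Some j) = bout + (i * nout + rank j).
Proof.
by move=> oj; rewrite /weight out_sum_leaf /label /block_index /= oj addn0.
Qed.

Lemma weight_in_leaf i j :
  ~~ o j -> weight (i, Some j) = bin + bc + (i * nin.+1 + rank j).
Proof.
move/negbTE=> oj; rewrite /weight out_sum_leaf /label /block_index /= oj.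
by rewrite mulnS; lia.
Qed.

Lemma weight_center i :
  weight (i, None) =
  bc + nout * bout + \sum_(j in leaves true) rank j + i * (nout * nout).+1.
Proof.
rewrite /weight out_sum_center (eq_bigr (fun j => bout + i * nout + rank j)).
  rewrite big_split /= sum_nat_const -/(nleaves true) /label /block_index /=.
  by set R := \sum_(j in _) _; nia.
by move=> j; rewrite inE => /eqP oj; rewrite /label /block_index /= oj addnA.
Qed.

Lemma weight_kind_inj u v : kind u = kind v -> weight u = weight v -> u = v.
Proof.
case: u v => [i [j|]] [i' [j'|]] //= => [[ojj']|_]; last first.
  by rewrite !weight_center => /addnI/eqP; rewrite eqn_pmul2r // => /eqP/val_inj->.
case: (boolP (o j')) => oj'; have oj := oj'; rewrite -ojj' in oj.
  by rewrite !weight_out_leaf // => /addnI; apply: leaf_index_inj => //; rewrite oj.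
rewrite !weight_in_leaf // => /addnI.
by apply: leaf_index_inj => //; rewrite (negbTE oj).
Qed.

End Labeling.

Section FewOutLeaves.
Hypothesis nout_le1 : nout <= 1.

Lemma few_out_labeling : labeling (label 1 (m * nout + m + 1) (m * nout + 1)).
Proof.
have sizes := mul_card_leaves.
apply: (labeling_label (pos := of_kind 0 2 1)).
- by do 2!case=> [[]|].
- by case=> [[]|]; rewrite /of_kind /block_size mulnS; lia.
- by do 2!case=> [[]|] //=; rewrite /of_kind /block_size; lia.
Qed.

Lemma few_out_weight_inj : injective (weight 1 (m * nout + m + 1) (m * nout + 1)).
Proof.
apply: (injective_by_blocks (kind := kind) (pos := of_kind 0 2 1)).
- by do 2!case=> [[]|].
- case=> [i [j|]] [i' [j'|]] //=.
  + case: (boolP (o j)) => oj; case: (boolP (o j')) => oj' //= _.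
    rewrite weight_out_leaf // weight_in_leaf //.
    by have := leaf_index_lt i j; rewrite oj; lia.
  + case: (boolP (o j)) => oj //= _; rewrite weight_out_leaf // weight_center.
    by have := leaf_index_lt i j; rewrite oj; lia.
  + case: (boolP (o j')) => oj' //= _; rewrite weight_center weight_in_leaf //.
    have sq : nout * nout = nout by case: (nout) nout_le1 => [|[]].
    by have := sum_rank_le; have := ltn_ord i; rewrite sq; nia.
- exact: weight_kind_inj.
Qed.

End FewOutLeaves.

Section ManyOutLeaves.
Hypothesis nout_gt1 : 1 < nout.

Lemma many_out_labeling : labeling (label (m * nin + 1) 1 (m * n + 1)).
Proof.
have sizes := mul_card_leaves.
apply: (labeling_label (pos := of_kind 1 0 2)).
- by do 2!case=> [[]|].
- by case=> [[]|]; rewrite /of_kind /block_size mulnS; lia.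
- by do 2!case=> [[]|] //=; rewrite /of_kind /block_size; lia.
Qed.

Lemma many_out_weight_inj : injective (weight (m * nin + 1) 1 (m * n + 1)).
Proof.
have sizes := mul_card_leaves.
apply: (injective_by_blocks (kind := kind) (pos := of_kind 0 1 2)).
- by do 2!case=> [[]|].
- case=> [i [j|]] [i' [j'|]] //=.
  + case: (boolP (o j)) => oj; case: (boolP (o j')) => oj' //= _.
    rewrite weight_out_leaf // weight_in_leaf //.
    by have := leaf_index_lt i j; rewrite oj; lia.
  + case: (boolP (o j)) => oj _; rewrite weight_center.
      by rewrite weight_out_leaf //; have := leaf_index_lt i j; rewrite oj; lia.
    rewrite weight_in_leaf //; have := leaf_index_lt i j; rewrite (negbTE oj).
    have nin_gt0 : 0 < nin by have := rank_lt j; rewrite (negbTE oj); lia.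
    have : m <= m * nin by rewrite leq_pmulr.
    have : 2 * (m * nin + 1) <= nout * (m * nin + 1).
      by rewrite leq_mul2r nout_gt1 orbT.
    by have := ltn_ord i; lia.
  + by case: (o j').
- exact: weight_kind_inj.
Qed.

End ManyOutLeaves.

Lemma star_forest_01_antimagic_labeling : exists f : V -> nat,
  labeling f /\ injective (fun x => f x + \sum_(y | arc x y) f y).
Proof.
case: (leqP nout 1) => [nout_le1|nout_gt1].
  by eexists; split; [exact: few_out_labeling | exact: few_out_weight_inj].
by eexists; split; [exact: many_out_labeling | exact: many_out_weight_inj].
Qed.

End StarForest.

Theorem mainTheorem7 (m n : nat) (o : 'I_n -> bool) :
  2 <= m -> 1 <= n ->
  D_antimagic (star_forest_arc m n o) [:: 0] /\
  D_antimagic (star_forest_arc m n o) [:: 0; 1].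
Proof.
move=> m_ge2 n_ge1; split; first exact: D_antimagic0.
have [u [v uv]] := star_forest_has_arc o (ltnW m_ge2) n_ge1.
have [f [f_lab f_inj]] := star_forest_01_antimagic_labeling m o.
exact: (D_antimagic01 (star_forest_irr o) uv f_lab f_inj).
Qed.
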